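(* Let $R$ be a subring of a ring $S$, and assume that every semiprime factor ring of $R$ and of $S$ is left or right Goldie and that the prime radical of every factor ring of $R$ and of $S$ is nilpotent. (i) If $I$ is an ideal of $R$ and $J$ an ideal of $S$ with $V_R(J\cap R)\subseteq V_R(I)$, then $V_S(J)\subseteq V_S(I^S)$. (ii) $\lambda$ is a left adjoint to $\rho$ if and only if for all ideals $I$ of $R$ and $J$ of $S$, $V_S(J)\subseteq V_S(I^S)$ implies $V_R(J\cap R)\subseteq V_R(I)$.
   Context: $\operatorname{Spec}$ carries the Zariski topology, closed sets $V_A(X)=\{P\in\operatorname{Spec} A:P\supseteq X\}$; for $U\subseteq\operatorname{Spec} A$, $I(U)$ is the intersection of the primes in $U$. For an ideal $I$ of $R$, $I^S=\operatorname{ann}_S(S/SI)$. The functor $\lambda$ sends a closed $V\subseteq\operatorname{Spec} S$ to $V_R(I(V)\cap R)$; the functor $\rho$ sends a closed $V\subseteq\operatorname{Spec} R$ to $V_S(I(V)^S)$. ''$\lambda$ is a left adjoint to $\rho$'' means $\lambda U\subseteq V\iff U\subseteq\rho V$ for all closed $U\subseteq\operatorname{Spec} S$, $V\subseteq\operatorname{Spec} R$. *)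

From mathcomp Require Import all_boot all_algebra.
Set Implicit Arguments. Unset Strict Implicit. Unset Printing Implicit Defensive.
Import GRing.Theory.
Local Open Scope ring_scope.

Definition subsetP {T : Type} (A B : T -> Prop) : Prop := forall x, A x -> B x.

Section RingNotions.
Variable T : pzRingType.

Definition addsubgroup (A : T -> Prop) : Prop :=
  A 0 /\ (forall x y, A x -> A y -> A (x - y)).

Definition left_ideal (A : T -> Prop) : Prop :=
  addsubgroup A /\ (forall r x, A x -> A (r * x)).
Definition right_ideal (A : T -> Prop) : Prop :=
  addsubgroup A /\ (forall r x, A x -> A (x * r)).
Definition ideal (A : T -> Prop) : Prop := left_ideal A /\ right_ideal A.

Definition prime_ideal (P : T -> Prop) : Prop :=
  ideal P /\ ~ P 1 /\
  (forall a b, (forall r, P (a * r * b)) -> P a \/ P b).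

Definition VV (X : T -> Prop) : (T -> Prop) -> Prop :=
  fun P => prime_ideal P /\ subsetP X P.

Definition II (U : (T -> Prop) -> Prop) : T -> Prop :=
  fun x => forall P, U P -> prime_ideal P -> P x.

Definition closed_spec (U : (T -> Prop) -> Prop) : Prop :=
  exists X : T -> Prop, forall P, U P <-> VV X P.

Definition spec_sub (U V : (T -> Prop) -> Prop) : Prop :=
  forall P, prime_ideal P -> U P -> V P.

Definition prime_radical : T -> Prop := fun x => forall P, prime_ideal P -> P x.

Definition semiprime_ring : Prop := forall x, prime_radical x -> x = 0.

(* a subset N is nilpotent: N^n = 0 for some n, i.e. every product of
   n elements of N vanishes (N^n is generated by such products) *)
Definition nilpotent_set (N : T -> Prop) : Prop :=
  exists n : nat, forall x : nat -> T, (forall i, (i < n)%N -> N (x i)) ->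
    \prod_(i < n) x i = 0.

Definition lann (X : T -> Prop) : T -> Prop := fun r => forall x, X x -> r * x = 0.
Definition rann (X : T -> Prop) : T -> Prop := fun r => forall x, X x -> x * r = 0.

Definition set_eq (A B : T -> Prop) := forall x, A x <-> B x.

Definition acc_lann : Prop :=
  forall X : nat -> (T -> Prop),
    (forall n, subsetP (lann (X n)) (lann (X n.+1))) ->
    exists N, forall m, (N <= m)%N -> set_eq (lann (X m)) (lann (X N)).
Definition acc_rann : Prop :=
  forall X : nat -> (T -> Prop),
    (forall n, subsetP (rann (X n)) (rann (X n.+1))) ->
    exists N, forall m, (N <= m)%N -> set_eq (rann (X m)) (rann (X N)).

(* the family L_0, L_1, ... has direct sum: L n meets L_0+...+L_{n-1} in 0 *)
Definition independent_family (L : nat -> (T -> Prop)) : Prop :=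
  forall n (y : nat -> T) x, L n x -> (forall i, (i < n)%N -> L i (y i)) ->
    x = \sum_(i < n) y i -> x = 0.

(* finite uniform (Goldie) dimension: no infinite direct sum of nonzero
   left (resp. right) ideals *)
Definition finite_left_udim : Prop :=
  ~ exists L : nat -> (T -> Prop),
      (forall n, left_ideal (L n)) /\ (forall n, exists x, L n x /\ x <> 0) /\
      independent_family L.
Definition finite_right_udim : Prop :=
  ~ exists L : nat -> (T -> Prop),
      (forall n, right_ideal (L n)) /\ (forall n, exists x, L n x /\ x <> 0) /\
      independent_family L.

Definition left_goldie : Prop := acc_lann /\ finite_left_udim.
Definition right_goldie : Prop := acc_rann /\ finite_right_udim.

End RingNotions.

(* Factor rings of A are (up to isomorphism) the targets of surjective
   ring morphisms out of A. *)
Definition semiprime_factors_goldie (A : pzRingType) : Prop :=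
  forall (T : pzRingType) (f : {rmorphism A -> T}),
    (forall t : T, exists a, f a = t) ->
    semiprime_ring T -> left_goldie T \/ right_goldie T.

Definition factor_radicals_nilpotent (A : pzRingType) : Prop :=
  forall (T : pzRingType) (f : {rmorphism A -> T}),
    (forall t : T, exists a, f a = t) ->
    nilpotent_set (@prime_radical T).

Section Extension.
Variables (R S : pzRingType) (i : {rmorphism R -> S}).

(* J \cap R, R viewed as a subring of S via the embedding i *)
Definition contr (J : S -> Prop) : R -> Prop := fun r => J (i r).

Definition SI (I : R -> Prop) : S -> Prop :=
  fun x => exists n (s : 'I_n -> S) (a : 'I_n -> R),
    (forall k, I (a k)) /\ x = \sum_(k < n) s k * i (a k).

(* I^S = ann_S(S/SI) = { s | s S \subseteq SI } *)
Definition extI (I : R -> Prop) : S -> Prop :=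
  fun s => forall t : S, SI I (s * t).

Definition lambda_ (U : (S -> Prop) -> Prop) : (R -> Prop) -> Prop :=
  VV (contr (II U)).
Definition rho_ (V : (R -> Prop) -> Prop) : (S -> Prop) -> Prop :=
  VV (extI (II V)).

Definition left_adjoint_lambda_rho : Prop :=
  forall (U : (S -> Prop) -> Prop) (V : (R -> Prop) -> Prop),
    closed_spec U -> closed_spec V ->
    (spec_sub (lambda_ U) V <-> spec_sub U (rho_ V)).

End Extension.

(* For an ideal K write rad K for the intersection of
   the primes containing K; nilpotency of the prime radical of A/K gives
   (rad K)^n <= K for some n.  As (M^S)^n <= (M^n)^S, (M \cap R)^n <= M^n \cap R,
   and a prime containing L^n contains L, every prime containing I^S (resp.
   J \cap R) also contains (rad I)^S (resp. rad J \cap R).  This proves (i)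
   (take K = Q \cap R for a prime Q over J), and on closed sets it identifies
   lambda and rho with J |-> J \cap R and I |-> I^S, which gives (ii). *)
From Pilot Require Import Defs.
From HB Require Import structures.
From mathcomp Require Import all_boot all_algebra.
From Stdlib Require Import ClassicalEpsilon Classical.
Set Implicit Arguments. Unset Strict Implicit. Unset Printing Implicit Defensive.
Import GRing.Theory.
Local Open Scope ring_scope.
Local Open Scope quotient_scope.

Section IdealFacts.
Variables (A : pzRingType) (K : A -> Prop).
Hypothesis idK : ideal K.

Lemma ideal0 : K 0. Proof. by case: idK => [[[K0 _] _] _]. Qed.
Lemma idealB x y : K x -> K y -> K (x - y).
Proof. by case: idK => [[[_ KB] _] _]; apply: KB. Qed.
Lemma idealN x : K x -> K (- x).
Proof. by move=> Kx; rewrite -sub0r; apply: idealB => //; apply: ideal0. Qed.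
Lemma idealD x y : K x -> K y -> K (x + y).
Proof. by move=> Kx Ky; rewrite -[y]opprK; apply/idealB/idealN. Qed.
Lemma ideal_mull r x : K x -> K (r * x). Proof. by case: idK => [[_ KM] _]; apply: KM. Qed.
Lemma ideal_mulr r x : K x -> K (x * r). Proof. by case: idK => [_ [_ KM]]; apply: KM. Qed.

Lemma ideal_sum m (F : 'I_m -> A) : (forall j, K (F j)) -> K (\sum_(j < m) F j).
Proof. by move=> KF; apply: (big_ind K ideal0 idealD) => j _; apply: KF. Qed.

End IdealFacts.

Lemma prime_ideal_ideal (T : pzRingType) (P : T -> Prop) : prime_ideal P -> ideal P.
Proof. by case. Qed.

Lemma ideal_II (T : pzRingType) (U : (T -> Prop) -> Prop) : ideal (II U).
Proof.
split; split; try split.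
- by move=> P _ /prime_ideal_ideal/ideal0.
- move=> x y Ux Uy P UP pP.
  exact: (idealB (prime_ideal_ideal pP) (Ux _ UP pP) (Uy _ UP pP)).
- by move=> r x Ux P UP pP; exact: (ideal_mull (prime_ideal_ideal pP) r (Ux _ UP pP)).
- by move=> P _ /prime_ideal_ideal/ideal0.
- move=> x y Ux Uy P UP pP.
  exact: (idealB (prime_ideal_ideal pP) (Ux _ UP pP) (Uy _ UP pP)).
- by move=> r x Ux P UP pP; exact: (ideal_mulr (prime_ideal_ideal pP) r (Ux _ UP pP)).
Qed.

Section Preimage.
Variables (A B : pzRingType) (f : {rmorphism A -> B}) (Q : B -> Prop).

Lemma ideal_preim : ideal Q -> ideal (fun a => Q (f a)).
Proof.
move=> idQ; split; split; try split.
- by rewrite rmorph0; apply: ideal0.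
- by move=> x y Qx Qy; rewrite rmorphB; apply: idealB.
- by move=> r x Qx; rewrite rmorphM; apply: ideal_mull.
- by rewrite rmorph0; apply: ideal0.
- by move=> x y Qx Qy; rewrite rmorphB; apply: idealB.
- by move=> r x Qx; rewrite rmorphM; apply: ideal_mulr.
Qed.

Lemma prime_ideal_preim : (forall b, exists a, f a = b) ->
  prime_ideal Q -> prime_ideal (fun a => Q (f a)).
Proof.
move=> f_surj [idQ [Q1 Qprime]]; split; first exact: ideal_preim.
split; first by rewrite rmorph1.
move=> a b Qab; apply: Qprime => t; have [r <-] := f_surj t.
by rewrite -!rmorphM; apply: Qab.
Qed.

End Preimage.

Section FactorRing.
Variables (A : pzRingType) (K : A -> Prop).
Hypothesis idK : ideal K.

Definition congr_mod (x y : A) : bool :=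
  if excluded_middle_informative (K (x - y)) then true else false.

Lemma congr_modP x y : reflect (K (x - y)) (congr_mod x y).
Proof. by rewrite /congr_mod; case: excluded_middle_informative; constructor. Qed.

Lemma congr_mod_refl : reflexive congr_mod.
Proof. by move=> x; apply/congr_modP; rewrite subrr; apply: ideal0. Qed.

Lemma congr_mod_sym : symmetric congr_mod.
Proof. by move=> x y; apply/congr_modP/congr_modP => /(idealN idK); rewrite opprB. Qed.

Lemma congr_mod_trans : transitive congr_mod.
Proof.
move=> y x z /congr_modP Kxy /congr_modP Kyz; apply/congr_modP.
by rewrite -[x](subrK y) -addrA; apply: idealD.
Qed.

Canonical congr_mod_equiv := EquivRel congr_mod congr_mod_refl congr_mod_sym congr_mod_trans.
Definition factor_ring := {eq_quot congr_mod}.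
HB.instance Definition _ := Choice.copy factor_ring {eq_quot congr_mod}.

Definition fr_pi (a : A) : factor_ring := \pi a.

Lemma fr_pi_eq (a b : A) : fr_pi a = fr_pi b <-> K (a - b).
Proof. by split => [/eqmodP/congr_modP | /congr_modP/eqmodP]. Qed.

Lemma repr_fr_pi a : K (repr (fr_pi a) - a).
Proof. by apply/fr_pi_eq; rewrite /fr_pi reprK. Qed.

Lemma fr_piW (P : factor_ring -> Prop) : (forall a, P (fr_pi a)) -> forall x, P x.
Proof. by move=> Pa x; rewrite -[x]reprK; apply: Pa. Qed.

Definition fr_opp (x : factor_ring) := fr_pi (- repr x).
Definition fr_add (x y : factor_ring) := fr_pi (repr x + repr y).
Definition fr_mul (x y : factor_ring) := fr_pi (repr x * repr y).

Lemma fr_oppE a : fr_opp (fr_pi a) = fr_pi (- a).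
Proof. by apply/fr_pi_eq; rewrite -opprD; apply/(idealN idK)/repr_fr_pi. Qed.

Lemma fr_addE a b : fr_add (fr_pi a) (fr_pi b) = fr_pi (a + b).
Proof.
apply/fr_pi_eq; rewrite opprD addrACA.
by apply: (idealD idK); apply: repr_fr_pi.
Qed.

Lemma fr_mulE a b : fr_mul (fr_pi a) (fr_pi b) = fr_pi (a * b).
Proof.
apply/fr_pi_eq; set a' := repr _; set b' := repr _.
have -> : a' * b' - a * b = (a' - a) * b' + a * (b' - b).
  by rewrite mulrBl mulrBr addrA subrK.
apply: (idealD idK); [apply: (ideal_mulr idK) | apply: (ideal_mull idK)].
all: exact: repr_fr_pi.
Qed.

Let fr_piE := (fr_oppE, fr_addE, fr_mulE).

Lemma fr_addA : associative fr_add.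
Proof. by do 3!elim/fr_piW=> ?; rewrite !fr_piE addrA. Qed.
Lemma fr_addC : commutative fr_add.
Proof. by do 2!elim/fr_piW=> ?; rewrite !fr_piE addrC. Qed.
Lemma fr_add0 : left_id (fr_pi 0) fr_add.
Proof. by elim/fr_piW=> ?; rewrite !fr_piE add0r. Qed.
Lemma fr_addN : left_inverse (fr_pi 0) fr_opp fr_add.
Proof. by elim/fr_piW=> ?; rewrite !fr_piE addNr. Qed.
Lemma fr_mulA : associative fr_mul.
Proof. by do 3!elim/fr_piW=> ?; rewrite !fr_piE mulrA. Qed.
Lemma fr_mul1 : left_id (fr_pi 1) fr_mul.
Proof. by elim/fr_piW=> ?; rewrite !fr_piE mul1r. Qed.
Lemma fr_mulr1 : right_id (fr_pi 1) fr_mul.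
Proof. by elim/fr_piW=> ?; rewrite !fr_piE mulr1. Qed.
Lemma fr_mulDl : left_distributive fr_mul fr_add.
Proof. by do 3!elim/fr_piW=> ?; rewrite !fr_piE mulrDl. Qed.
Lemma fr_mulDr : right_distributive fr_mul fr_add.
Proof. by do 3!elim/fr_piW=> ?; rewrite !fr_piE mulrDr. Qed.

HB.instance Definition _ := GRing.isPzRing.Build factor_ring
  fr_addA fr_addC fr_add0 fr_addN fr_mulA fr_mul1 fr_mulr1 fr_mulDl fr_mulDr.

Lemma fr_pi_is_additive : {morph fr_pi : x y / x - y}.
Proof. by move=> x y; rewrite -fr_addE -fr_oppE. Qed.

Lemma fr_pi_is_multiplicative : {morph fr_pi : x y / x * y} /\ fr_pi 1 = 1.
Proof. by split=> // x y; rewrite -fr_mulE. Qed.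

HB.instance Definition _ := GRing.isZmodMorphism.Build A factor_ring fr_pi
  fr_pi_is_additive.
HB.instance Definition _ := GRing.isMultiplicative.Build A factor_ring fr_pi
  fr_pi_is_multiplicative.

Lemma fr_pi_surj (t : factor_ring) : exists a, fr_pi a = t.
Proof. by exists (repr t); rewrite /fr_pi reprK. Qed.

Lemma fr_pi_eq0 a : fr_pi a = 0 <-> K a.
Proof. by rewrite -(rmorph0 fr_pi) fr_pi_eq subr0. Qed.

End FactorRing.

Section Radical.
Variable A : pzRingType.

Definition prodset (M : A -> Prop) n (a : A) : Prop :=
  exists x : nat -> A, (forall k, (k < n)%N -> M (x k)) /\ a = \prod_(k < n) x k.

Lemma prodset0 M : prodset M 0 1.
Proof. by exists (fun=> 0); rewrite big_ord0. Qed.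

Lemma prodsetSr M n a c : prodset M n a -> M c -> prodset M n.+1 (a * c).
Proof.
move=> [x [Mx ->]] Mc; exists (fun k => if (k < n)%N then x k else c); split.
  by move=> k _; case: ifP => [/Mx|_].
rewrite big_ord_recr /= ltnn; congr (_ * _).
by apply: eq_bigr => k _; rewrite ltn_ord.
Qed.

Lemma prodsetSrP M n a : prodset M n.+1 a ->
  exists b c, [/\ prodset M n b, M c & a = b * c].
Proof.
move=> [x [Mx ->]]; exists (\prod_(k < n) x k), (x n).
by rewrite big_ord_recr; split=> //; [exists x; split=> // k /ltnW/Mx | apply: Mx].
Qed.

Lemma prodset_mono M N n : Defs.subsetP M N -> Defs.subsetP (prodset M n) (prodset N n).
Proof. by move=> MN a [x [Mx ->]]; exists x; split=> // k /Mx/MN. Qed.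

(* II (VV K) maps into the prime radical of the factor ring A/K. *)
Lemma radical_pow_sub (K : A -> Prop) : factor_radicals_nilpotent A -> ideal K ->
  exists n, Defs.subsetP (prodset (II (VV K)) n) K.
Proof.
move=> nilA idK; have [n radN] := nilA _ (fr_pi idK) (@fr_pi_surj _ _ idK).
exists n => _ [x [radx ->]]; apply/(fr_pi_eq0 idK); rewrite rmorph_prod.
apply: (radN (fun k => fr_pi idK (x k))) => k ltkn P pP.
have pPK := prime_ideal_preim (@fr_pi_surj _ _ idK) pP.
apply: (radx k ltkn _ _ pPK); split=> // a /(fr_pi_eq0 idK) Ka0.
by rewrite -[X in P X]/(fr_pi idK a) Ka0; apply: ideal0 (prime_ideal_ideal pP).
Qed.

(* If c \in L \ P then a r c \in L^(n+1) <= P for all r, so primeness puts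
   every a \in L^n into P. *)
Lemma prime_ideal_pow_sub (P L : A -> Prop) n : prime_ideal P ->
  (forall r a, L a -> L (r * a)) -> Defs.subsetP (prodset L n) P -> Defs.subsetP L P.
Proof.
move=> [_ [P1 Pprime]] Lmul; elim: n => [|n IHn] LnP.
  by case: P1; apply/LnP/prodset0.
case: (classic (Defs.subsetP L P)) => [//|/(not_all_ex_not _ _) [c nLPc]].
have [Lc Pc] := imply_to_and _ _ nLPc.
apply: IHn => a Lna; have [//|/Pc //] : P a \/ P c.
by apply: Pprime => r; rewrite -mulrA; apply/LnP/prodsetSr/Lmul.
Qed.

End Radical.

Section Extension.
Variables (R S : pzRingType) (i : {rmorphism R -> S}).
Implicit Types (X Y : R -> Prop) (J Q : S -> Prop).

Lemma SI_gen X s a : X a -> SI i X (s * i a).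
Proof. by move=> Xa; exists 1%N, (fun=> s), (fun=> a); rewrite big_ord1. Qed.

Lemma SI_add X z w : SI i X z -> SI i X w -> SI i X (z + w).
Proof.
move=> [n [s [a [Xa ->]]]] [m [s' [a' [Xa' ->]]]].
exists (n + m)%N, (fun k => match split k with inl j => s j | inr j => s' j end),
  (fun k => match split k with inl j => a j | inr j => a' j end); split.
  by move=> k; case: (split k).
rewrite big_split_ord; congr (_ + _); apply: eq_bigr => k _.
  by rewrite (unsplitK (inl _)).
by rewrite (unsplitK (inr _)).
Qed.

Lemma SI_sum X m (F : 'I_m -> S) : (forall j, SI i X (F j)) -> SI i X (\sum_(j < m) F j).
Proof.
have SI0 : SI i X 0 by exists 0%N, (fun=> 0), (fun=> 0); split; [case | rewrite big_ord0].
by move=> XF; apply: (big_ind (SI i X) SI0 (@SI_add X)) => j _; apply: XF.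
Qed.

Lemma SI_mull X w z : SI i X z -> SI i X (w * z).
Proof.
move=> [n [s [a [Xa ->]]]]; exists n, (fun k => w * s k), a; split=> //.
by rewrite mulr_sumr; apply: eq_bigr => k _; rewrite mulrA.
Qed.

Lemma SI_mulr X Y z c : SI i X z -> (forall a, X a -> Y (a * c)) -> SI i Y (z * i c).
Proof.
move=> [n [s [a [Xa ->]]]] XcY; exists n, s, (fun k => a k * c); split.
  by move=> k; apply/XcY/Xa.
by rewrite mulr_suml; apply: eq_bigr => k _; rewrite rmorphM mulrA.
Qed.

Lemma SI_mono X Y : Defs.subsetP X Y -> Defs.subsetP (SI i X) (SI i Y).
Proof. by move=> XY _ [n [s [a [Xa ->]]]]; exists n, s, a; split=> // k; apply/XY/Xa. Qed.

Lemma SI_sub_ideal X Q : ideal Q -> Defs.subsetP X (contr i Q) -> Defs.subsetP (SI i X) Q.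
Proof.
move=> idQ XQ _ [n [s [a [Xa ->]]]]; apply: (ideal_sum idQ) => k.
exact/(ideal_mull idQ)/XQ/Xa.
Qed.

Lemma extI_mull X r s : extI i X s -> extI i X (r * s).
Proof. by move=> Xs t; rewrite -mulrA; apply: SI_mull. Qed.

Lemma extI_mono X Y : Defs.subsetP X Y -> Defs.subsetP (extI i X) (extI i Y).
Proof. by move=> XY s Xs t; apply: SI_mono XY _ (Xs t). Qed.

Lemma extI_contr_sub Q : ideal Q -> Defs.subsetP (extI i (contr i Q)) Q.
Proof. by move=> idQ s Qs; rewrite -[s]mulr1; apply: SI_sub_ideal idQ _ _ (Qs 1). Qed.

Lemma prodset_extI X n : Defs.subsetP (prodset (extI i X) n) (extI i (prodset X n)).
Proof.
elim: n => [|n IHn] _ [y [Xy ->]] t.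
  by rewrite big_ord0 mul1r -[t]mulr1 -(rmorph1 i); apply/SI_gen/prodset0.
have [b [c [Xnb Xc ->]]] := prodsetSrP (ex_intro _ y (conj Xy erefl)).
rewrite -mulrA; have [m [s [a [Xa ->]]]] := Xc t.
rewrite mulr_sumr; apply: SI_sum => k; rewrite mulrA.
by apply: SI_mulr (IHn _ Xnb (s k)) _ => b' Xnb'; apply: prodsetSr.
Qed.

Lemma prodset_contr J n : Defs.subsetP (prodset (contr i J) n) (contr i (prodset J n)).
Proof.
by move=> _ [x [Jx ->]]; exists (fun k => i (x k)); rewrite rmorph_prod.
Qed.

End Extension.

Lemma spec_sub_trans (T : pzRingType) (U V W : (T -> Prop) -> Prop) :
  spec_sub U V -> spec_sub V W -> spec_sub U W.
Proof. by move=> UV VW P pP /(UV P pP)/(VW P pP). Qed.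

Lemma closed_VV (T : pzRingType) (X : T -> Prop) : closed_spec (VV X).
Proof. by exists X. Qed.

Lemma closed_specE (T : pzRingType) (U : (T -> Prop) -> Prop) P :
  closed_spec U -> prime_ideal P -> U P <-> VV (II U) P.
Proof.
move=> [X UE] pP; split=> [UP | [_ IUP]]; first by split=> // x; apply.
apply/UE; split=> // x Xx; apply: IUP => P' /UE [_ XP'] _; exact: XP'.
Qed.

Lemma spec_sub_closedl (T : pzRingType) (U W : (T -> Prop) -> Prop) :
  closed_spec U -> spec_sub U W <-> spec_sub (VV (II U)) W.
Proof. by move=> cU; split=> UW P pP /(closed_specE cU pP)/(UW P pP). Qed.

Lemma spec_sub_closedr (T : pzRingType) (V W : (T -> Prop) -> Prop) :
  closed_spec V -> spec_sub W V <-> spec_sub W (VV (II V)).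
Proof. by move=> cV; split=> WV P pP /(WV P pP)/(closed_specE cV pP). Qed.

Section Transport.
Variables (R S : pzRingType) (i : {rmorphism R -> S}).

Lemma VV_extI_of_VV_contr (I : R -> Prop) (J : S -> Prop) :
  factor_radicals_nilpotent R -> ideal J ->
  spec_sub (VV (contr i J)) (VV I) -> spec_sub (VV J) (VV (extI i I)).
Proof.
move=> nilR idJ VJI Q pQ [_ JQ]; split=> //.
have idQ := prime_ideal_ideal pQ.
have [n radQ] := radical_pow_sub nilR (ideal_preim i idQ).
have I_radQ : Defs.subsetP I (II (VV (contr i Q))).
  move=> a Ia P [pP QP] _; case: (VJI P pP) => [|_ IP]; last exact: IP.
  by split=> // r /JQ/QP.
apply: (prime_ideal_pow_sub pQ (@extI_mull _ _ i I)) => s /(prodset_extI (n := n)) Is.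
apply: (extI_contr_sub idQ); apply: extI_mono Is => a.
by move/(prodset_mono I_radQ); apply: radQ.
Qed.

Lemma VV_extI_sub_rho (I : R -> Prop) : factor_radicals_nilpotent R -> ideal I ->
  spec_sub (VV (extI i I)) (rho_ i (VV I)).
Proof.
move=> nilR idI Q pQ [_ IQ]; split=> //.
have [n radI] := radical_pow_sub nilR idI.
apply: (prime_ideal_pow_sub pQ (@extI_mull _ _ i _)) => s /(prodset_extI (n := n)) Is.
by apply/IQ/(extI_mono radI).
Qed.

Lemma VV_contr_sub_lambda (J : S -> Prop) : factor_radicals_nilpotent S -> ideal J ->
  spec_sub (VV (contr i J)) (lambda_ i (VV J)).
Proof.
move=> nilS idJ P pP [_ JP]; split=> //.
have [n radJ] := radical_pow_sub nilS idJ.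
have radJ_mull r a : contr i (II (VV J)) a -> contr i (II (VV J)) (r * a).
  by rewrite /contr rmorphM; apply: (ideal_mull (ideal_II _)).
apply: (prime_ideal_pow_sub pP radJ_mull) => a /(prodset_contr (n := n)) Ja.
exact/JP/radJ.
Qed.

End Transport.

Theorem lemma3p12 (R S : nzRingType) (i : {rmorphism R -> S}) :
  injective i ->
  semiprime_factors_goldie R -> semiprime_factors_goldie S ->
  factor_radicals_nilpotent R -> factor_radicals_nilpotent S ->
  (forall (I : R -> Prop) (J : S -> Prop), ideal I -> ideal J ->
     spec_sub (VV (contr i J)) (VV I) ->
     spec_sub (VV J) (VV (extI i I)))
  /\
  (left_adjoint_lambda_rho i <->
   (forall (I : R -> Prop) (J : S -> Prop), ideal I -> ideal J ->
      spec_sub (VV J) (VV (extI i I)) ->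
      spec_sub (VV (contr i J)) (VV I))).
Proof.
move=> _ _ _ nilR nilS.
split=> [I J _ idJ | ]; first exact: VV_extI_of_VV_contr.
split=> [adj I J idI idJ VJI | crit U V cU cV].
  apply: (spec_sub_trans (VV_contr_sub_lambda nilS idJ)).
  apply/(adj _ _ (closed_VV J) (closed_VV I)).
  exact: (spec_sub_trans VJI (VV_extI_sub_rho nilR idI)).
rewrite /lambda_ /rho_ (spec_sub_closedr _ cV) (spec_sub_closedl _ cU).
split; [exact: VV_extI_of_VV_contr nilR (ideal_II _) | exact: crit (ideal_II _) (ideal_II _)].
Qed.
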